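(* For all integers $r \geq 2$ and $k \geq 3$, we have $P_r(k) > (k-1) r$.
   Context: A colour pattern on a vertex set $V$ is a sequence $G_1,\dots,G_r$ of pairwise edge-disjoint graphs all having vertex set $V$; it is $K_{k+1}$-free if no $G_i$ contains $K_{k+1}$. Given a colour pattern $G_1,\dots,G_r$ on $V$ and a colouring $c: V \to [r]$, a strongly monochromatic $K_k$ is a set of $k$ vertices all receiving the same colour $i$ under $c$ and forming a clique in $G_i$. $P_r(k)$ is the smallest integer $n$ such that there exists a $K_{k+1}$-free colour pattern $G_1,\dots,G_r$ on an $n$-element vertex set $V$ such that every colouring $V \to [r]$ yields a strongly monochromatic $K_k$. *)

From mathcomp Require Import all_boot.
Set Implicit Arguments. Unset Strict Implicit. Unset Printing Implicit Defensive.

Definition simple_graph (V : finType) (g : rel V) : Prop :=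
  (forall x, ~~ g x x) /\ (forall x y, g x y = g y x).

Definition is_clique (V : finType) (g : rel V) (S : {set V}) : Prop :=
  forall x y, x \in S -> y \in S -> x != y -> g x y.

Definition has_clique (V : finType) (g : rel V) (m : nat) : Prop :=
  exists S : {set V}, #|S| = m /\ is_clique g S.

Definition colour_pattern (V : finType) (r : nat) (G : 'I_r -> rel V) : Prop :=
  (forall i, simple_graph (G i)) /\
  (forall i j x y, i != j -> ~~ (G i x y && G j x y)).

Definition Kfree_pattern (V : finType) (r : nat) (G : 'I_r -> rel V) (m : nat) : Prop :=
  forall i, ~ has_clique (G i) m.

Definition has_strong_mono_clique (V : finType) (r : nat) (G : 'I_r -> rel V)
    (c : V -> 'I_r) (k : nat) : Prop :=
  exists (i : 'I_r) (S : {set V}),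
    #|S| = k /\ (forall x, x \in S -> c x = i) /\ is_clique (G i) S.

(* n-vertex witness for P_r(k) <= n: a K_{k+1}-free colour pattern on an n-set
   such that every colouring yields a strongly monochromatic K_k. *)
Definition P_witness (r k n : nat) : Prop :=
  exists G : 'I_r -> rel 'I_n,
    colour_pattern G /\ Kfree_pattern G k.+1 /\
    forall c : 'I_n -> 'I_r, has_strong_mono_clique G c k.

From mathcomp Require Import all_boot.

Set Implicit Arguments. Unset Strict Implicit. Unset Printing Implicit Defensive.

(* Split the n <= (k-1) r vertices into r consecutive blocks of k - 1; colouring
   each block with its own colour leaves every colour class with fewer than k
   vertices, so no colour can carry a monochromatic K_k, whatever the pattern. *)

Lemma no_strong_mono_clique (V : finType) (r k : nat) (G : 'I_r -> rel V)
    (c : V -> 'I_r) :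
  (forall i, #|[set v | c v == i]| < k) -> ~ has_strong_mono_clique G c k.
Proof.
move=> small [i [S [cardS [cS _]]]].
have sub_fibre : S \subset [set v | c v == i].
  by apply/subsetP=> v vS; rewrite inE cS.
by move: (small i); rewrite -cardS ltnNge (subset_leq_card sub_fibre).
Qed.

Lemma block_colouring (n d r : nat) :
  0 < d -> n <= d * r -> exists c : 'I_n -> 'I_r, forall i, #|[set v | c v == i]| <= d.
Proof.
move=> d_gt0 le_n_dr.
have block_lt (v : 'I_n) : v %/ d < r.
  by rewrite ltn_divLR // mulnC (leq_trans (ltn_ord v)).
have offset_lt (v : 'I_n) : v %% d < d by rewrite ltn_mod.
exists (fun v => Ordinal (block_lt v)) => i.
set F := [set v | _].
have inj_offset : {in F &, injective (fun v => Ordinal (offset_lt v))}.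
  move=> x y; rewrite !inE => /eqP cx /eqP cy /(congr1 val) /= eq_mod.
  have eq_div : x %/ d = y %/ d by have := congr1 val (etrans cx (esym cy)).
  by apply: val_inj; rewrite /= (divn_eq x d) (divn_eq y d) eq_div eq_mod.
rewrite -(card_in_imset inj_offset).
by rewrite -[d in _ <= d]card_ord max_card.
Qed.

Theorem lemma3p1 (r k : nat) (hr : 2 <= r) (hk : 3 <= k) :
  forall n : nat, n <= (k - 1) * r -> ~ P_witness r k n.
Proof.
move=> n le_n [G [_ [_ all_mono]]].
have k1_gt0 : 0 < k - 1 by rewrite subn_gt0 (leq_trans _ hk).
have [c small] := block_colouring k1_gt0 le_n.
apply: (no_strong_mono_clique (c := c)) (all_mono c) => i.
by rewrite (leq_ltn_trans (small i)) // ltn_subrL (leq_trans _ hk).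
Qed.
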